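(* Let $d\in\mathbb{N}_+$, $T>0$, and let $f\colon\mathbb{R}^d\times[0,T]\to\mathbb{R}^d$ be continuous in $t$ with $\|f(x,t)-f(y,t)\|\le L\|x-y\|$ for all $x,y\in\mathbb{R}^d$, $t\in[0,T]$, for some $L>0$. Let $K\subseteq\mathbb{R}^d$ be compact and for $t\in[0,T]$ define $$K_t:=\Big\{x\in\mathbb{R}^d:\ \|x\|\le\sup_{z\in K}\Big(\|z\|+t+\int_0^t\|f(0,s)\|\,ds\Big)\exp(Lt)\Big\}.$$ Let $f_1\in\mathcal{C}(\mathbb{R}^d\times[0,T];\mathbb{R}^d)$ be locally Lipschitz in $x$ and satisfy $\|f_1-f\|_{L^\infty(K_T\times[0,T];\mathbb{R}^d)}\le1$, and let $\mathbf{y}$ be the solution of $\dot{\mathbf y}=f_1(\mathbf y,t)$, $\mathbf y(0)=z_0\in K$. Then $\mathbf y(t)\in K_t$ for every $t\in[0,T]$.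
   Context: $\|\cdot\|$ denotes the Euclidean norm on $\mathbb{R}^d$. *)

From HB Require Import structures.
From mathcomp Require Import all_boot all_order all_algebra.
From mathcomp Require Import all_classical all_reals all_analysis.
Set Implicit Arguments. Unset Strict Implicit. Unset Printing Implicit Defensive.
Import Order.TTheory GRing.Theory Num.Theory.
Import numFieldNormedType.Exports.
Local Open Scope classical_set_scope.
Local Open Scope ring_scope.

(* Euclidean norm on R^d (the library norm on 'rV is the max norm). *)
Definition enorm {R : realType} {d : nat} (x : 'rV[R]_d) : R :=
  Num.sqrt (\sum_(i < d) (x ord0 i) ^+ 2).

Definition int_f0 {R : realType} {d : nat} (f : 'rV[R]_d -> R -> 'rV[R]_d)
  (t : R) : R :=
  Rintegral lebesgue_measure [set` `[0, t]] (fun s => enorm (f 0 s)).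

Definition Kradius {R : realType} {d : nat} (f : 'rV[R]_d -> R -> 'rV[R]_d)
  (L : R) (K : set 'rV[R]_d) (t : R) : R :=
  sup [set enorm z + t + int_f0 f t | z in K] * expR (L * t).

Definition Kt {R : realType} {d : nat} (f : 'rV[R]_d -> R -> 'rV[R]_d)
  (L : R) (K : set 'rV[R]_d) (t : R) : set 'rV[R]_d :=
  [set x | enorm x <= Kradius f L K t].

Definition loc_lipschitz_x {R : realType} {d : nat}
  (g : 'rV[R]_d -> R -> 'rV[R]_d) (T : R) : Prop :=
  forall x0 : 'rV[R]_d, exists r : R, exists M : R, 0 < r /\
    forall x y : 'rV[R]_d, forall t : R, t \in `[0, T] ->
      enorm (x - x0) < r -> enorm (y - x0) < r ->
      enorm (g x t - g y t) <= M * enorm (x - y).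

(* Along the trajectory, as long as y stays in K_T the field is controlled by
   the closeness of f1 to f and the Lipschitz bound on f:
     ||f1 (y s) s|| <= L ||y s|| + 1 + ||f 0 s||,
   so Gronwall's inequality gives
     ||y t|| <= (||y 0|| + t + int_0^t ||f 0 s|| ds) exp (L t) <= radius of K_t.
   The radius of K_t increases strictly with t, hence y lies strictly inside
   K_T before time T, and a continuity argument on the supremum of the times up
   to which y stays in K_T shows that the Gronwall bound holds on all of [0, T]. *)

From HB Require Import structures.
From mathcomp Require Import all_boot all_order all_algebra.
From mathcomp Require Import all_classical all_reals all_analysis.
From mathcomp Require Import ring lra.
Import Order.TTheory GRing.Theory Num.Theory.
Import numFieldNormedType.Exports.
Local Open Scope classical_set_scope.
Local Open Scope ring_scope.

Lemma CauchySchwarz_sum (R : realDomainType) n (a b : 'I_n -> R) :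
  (\sum_i a i * b i) ^+ 2 <= (\sum_i a i ^+ 2) * (\sum_i b i ^+ 2).
Proof.
have sum_prod (u v : 'I_n -> R) :
    \sum_i \sum_j u i * v j = (\sum_i u i) * (\sum_j v j).
  by rewrite mulr_suml; apply: eq_bigr => i _; rewrite mulr_sumr.
have lagrange : \sum_i \sum_j (a i * b j - a j * b i) ^+ 2 =
    2 * ((\sum_i a i ^+ 2) * (\sum_i b i ^+ 2) - (\sum_i a i * b i) ^+ 2).
  transitivity (\sum_i \sum_j a i ^+ 2 * b j ^+ 2
      + \sum_i \sum_j b i ^+ 2 * a j ^+ 2
      - 2 * \sum_i \sum_j (a i * b i) * (a j * b j)).
    rewrite -big_split /= mulr_sumr -sumrB; apply: eq_bigr => i _.
    rewrite -big_split /= mulr_sumr -sumrB; apply: eq_bigr => j _.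
    ring.
  by rewrite !sum_prod [(\sum_i b i ^+ 2) * _]mulrC; ring.
have : 0 <= \sum_i \sum_j (a i * b j - a j * b i) ^+ 2.
  by apply: sumr_ge0 => i _; apply: sumr_ge0 => j _; exact: sqr_ge0.
by rewrite lagrange pmulr_rge0 // subr_ge0.
Qed.

Definition edot {R : realType} {d : nat} (x y : 'rV[R]_d) : R :=
  \sum_i x ord0 i * y ord0 i.

Section euclidean_norm.
Context {R : realType} {d : nat}.
Implicit Types x y : 'rV[R]_d.

Lemma edot_ge0 x : 0 <= edot x x.
Proof. by apply: sumr_ge0 => i _; rewrite -expr2 sqr_ge0. Qed.

Lemma enorm_sqr x : enorm x ^+ 2 = edot x x.
Proof.
rewrite sqr_sqrtr; last by apply: sumr_ge0 => i _; exact: sqr_ge0.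
by apply: eq_bigr => i _; rewrite expr2.
Qed.

Lemma enormE x : enorm x = Num.sqrt (edot x x).
Proof. by rewrite -enorm_sqr sqrtr_sqr ger0_norm // sqrtr_ge0. Qed.

Lemma enorm_ge0 x : 0 <= enorm x.
Proof. exact: sqrtr_ge0. Qed.

Lemma edot_le_enorm x y : edot x y <= enorm x * enorm y.
Proof.
have [xy_le0|xy_gt0] := lerP (edot x y) 0.
  by rewrite (le_trans xy_le0) // mulr_ge0 // enorm_ge0.
rewrite -ler_sqr ?nnegrE ?(ltW xy_gt0) ?mulr_ge0 ?enorm_ge0 // exprMn !enorm_sqr.
exact: CauchySchwarz_sum.
Qed.

Lemma edot_selfD x y : edot (x + y) (x + y) = edot x x + 2 * edot x y + edot y y.
Proof.
rewrite /edot mulr_sumr -!big_split /=; apply: eq_bigr => i _; rewrite !mxE; ring.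
Qed.

Lemma enormD x y : enorm (x + y) <= enorm x + enorm y.
Proof.
rewrite -ler_sqr ?nnegrE ?addr_ge0 ?enorm_ge0 // sqrrD !enorm_sqr edot_selfD.
by rewrite lerD2r lerD2l mulr2n -mulr2n mulr_natl ler_wMn2r // edot_le_enorm.
Qed.

Lemma continuous_sqrt_edotD (c : R) :
  continuous (fun x : 'rV[R]_d => Num.sqrt (edot x x + c)).
Proof.
move=> x; apply: (@continuous_comp _ _ _ (fun x : 'rV[R]_d => edot x x + c));
  last exact: sqrt_continuous.
apply: (@continuousD _ _ _ (fun x : 'rV[R]_d => edot x x) (fun=> c));
  last exact: cst_continuous.
apply: (@continuous_big _ _ +%R 0 predT add_continuous _ _
  (fun i (x : 'rV[R]_d) => x ord0 i * x ord0 i)) => i _ z.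
by apply: (@continuousM _ _ (fun x : 'rV[R]_d => x ord0 i) (fun x => x ord0 i));
  exact: coord_continuous.
Qed.

Lemma continuous_enorm : continuous (@enorm R d).
Proof.
have := continuous_sqrt_edotD 0.
by under eq_fun do rewrite addr0 -enormE.
Qed.

Lemma continuous_within_enorm {T : topologicalType} (A : set T) (y : T -> 'rV[R]_d) :
  {within A, continuous y} -> {within A, continuous (fun s => enorm (y s))}.
Proof.
move=> cy s; apply: (@continuous_comp (subspace A) _ _ y enorm); first exact: cy.
exact: continuous_enorm.
Qed.

End euclidean_norm.

Lemma is_derive_mx_coord {R : realFieldType} {V : normedModType R} {m n}
    {M : V -> 'M[R]_(m, n)} {t v : V} {D : 'M[R]_(m, n)} i j :
  is_derive t v M D -> is_derive t v (fun x => M x i j) (D i j).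
Proof.
move=> dM; have derM : derivable M t v := @ex_derive _ _ _ _ _ _ _ dM.
have derMij : derivable (fun x => M x i j) t v by move/derivable_mxP: derM.
apply: DeriveDef => //.
have := derive_mx derM; rewrite derive_val => /(congr1 (fun N : 'M[R]_(m, n) => N i j)).
by rewrite mxE.
Qed.

Section smoothed_norm.
Context {R : realType} {d : nat}.

Lemma is_derive_edot_self {y : R -> 'rV[R]_d} {t : R} {Y : 'rV[R]_d} :
  is_derive t 1 y Y ->
  is_derive t 1 (fun s => edot (y s) (y s)) (2 * edot (y t) Y).
Proof.
move=> dy; rewrite /edot mulr_sumr.
have := is_derive_sum (fun i => is_deriveM (is_derive_mx_coord ord0 i dy)
                                          (is_derive_mx_coord ord0 i dy)).
rewrite fct_sumE => dsum; apply: is_derive_eq.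
by apply: eq_bigr => i _; rewrite /GRing.scale /=; ring.
Qed.

Lemma is_derive_sqrt_edotD {c : R} {y : R -> 'rV[R]_d} {t : R} {Y : 'rV[R]_d} :
  0 < c -> is_derive t 1 y Y ->
  is_derive t 1 (fun s => Num.sqrt (edot (y s) (y s) + c))
    (edot (y t) Y / Num.sqrt (edot (y t) (y t) + c)).
Proof.
move=> c0 dy.
have pos : 0 < edot (y t) (y t) + c by rewrite ltr_wpDl // edot_ge0.
have dsum : is_derive t 1 (fun s => edot (y s) (y s) + c) (2 * edot (y t) Y).
  by have := is_deriveD (is_derive_edot_self dy) (is_derive_cst c t 1); rewrite addr0.
have := is_derive1_comp (g := fun s => edot (y s) (y s) + c) (is_derive1_sqrt pos) dsum.
move=> dcomp; apply: is_derive_eq.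
by field; rewrite gt_eqF // sqrtr_gt0.
Qed.

End smoothed_norm.

Lemma linear_gronwall {R : realType} {L t : R} {u du H h : R -> R} :
  0 <= L -> 0 <= t ->
  {within `[0, t], continuous u} -> {within `[0, t], continuous H} ->
  (forall s, s \in `]0, t[ -> is_derive s 1 u (du s)) ->
  (forall s, s \in `]0, t[ -> is_derive s 1 H (h s)) ->
  (forall s, s \in `]0, t[ -> 0 <= h s) ->
  (forall s, s \in `]0, t[ -> du s <= L * u s + h s) ->
  u t <= (u 0 + (H t - H 0)) * expR (L * t).
Proof.
move=> L0 t0 cu cH du_u dH h0 du_le.
pose e s := expR (- (L * s)).
pose m s := e s * u s - H s.
have de (s : R) : is_derive s 1 e (e s * - L).
  apply: (is_derive1_comp (g := fun s => - (L * s))) => //.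
  by apply: is_derive_eq; rewrite -[in RHS](mulr1 L).
have dm (s : R) : s \in `]0, t[ -> is_derive s 1 m (e s * (du s - L * u s) - h s).
  move=> st; have de_s := de s; have du_s := du_u s st; have dH_s := dH s st.
  by apply: is_derive_eq; rewrite /GRing.scale /=; ring.
have dm_le0 (s : R) : s \in `]0, t[ -> e s * (du s - L * u s) - h s <= 0.
  move=> st; have := h0 s st; have := du_le s st.
  have e_gt0 : 0 < e s := expR_gt0 _.
  have e_le1 : e s <= 1.
    by rewrite expR_le1 oppr_le0 mulr_ge0 //; move: st; rewrite in_itv => /andP[/ltW].
  nra.
have cm : {within `[0, t], continuous m}.
  have ce : continuous e.
    by move=> s; apply/differentiable_continuous/derivable1_diffP;
      exact: (@ex_derive _ _ _ _ _ _ _ (de s)).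
  move=> s; apply: cvgB; last exact: cH.
  by apply: cvgM; [exact: (continuous_subspaceT ce) | exact: cu].
have : m t <= m 0.
  apply: (ler0_derive1_le_cc _ _ cm); rewrite ?in_itv /= ?lexx ?t0 //.
  - by move=> s /dm /(@ex_derive _ _ _ _ _ _ _).
  - by move=> s st; have ds := dm s st; rewrite derive1E derive_val; exact: dm_le0.
rewrite /m /e mulr0 oppr0 expR0 mul1r expRN -ler_pdivrMr ?expR_gt0 //.
by rewrite mulrC; lra.
Qed.

Lemma enorm_gronwall {R : realType} {d} {L t : R} {y Y : R -> 'rV[R]_d} {H h : R -> R} :
  0 <= L -> 0 <= t ->
  {within `[0, t], continuous y} -> {within `[0, t], continuous H} ->
  (forall s, s \in `]0, t[ -> is_derive s 1 y (Y s)) ->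
  (forall s, s \in `]0, t[ -> is_derive s 1 H (h s)) ->
  (forall s, s \in `]0, t[ -> 0 <= h s) ->
  (forall s, s \in `]0, t[ -> enorm (Y s) <= L * enorm (y s) + h s) ->
  enorm (y t) <= (enorm (y 0) + (H t - H 0)) * expR (L * t).
Proof.
move=> L0 t0 cy cH dy dH h0 Y_le.
have E_gt0 : 0 < expR (L * t) := expR_gt0 _.
(* [enorm \o y] need not be differentiable where [y] vanishes, so we work with
   [sqrt (enorm (y s) ^+ 2 + eta ^+ 2)] and let [eta] go to [0]. *)
suff smoothed eta : 0 < eta ->
    enorm (y t) <= (enorm (y 0) + eta + (H t - H 0)) * expR (L * t).
  apply/ler_addgt0Pr => e e0.
  have := smoothed _ (divr_gt0 e0 E_gt0).
  by rewrite -addrA [e / _ + _]addrC addrA mulrDl divfK ?gt_eqF.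
move=> eta0; pose u s := Num.sqrt (edot (y s) (y s) + eta ^+ 2).
have u_gt0 s : 0 < u s by rewrite sqrtr_gt0 ltr_wpDl ?edot_ge0 ?exprn_gt0.
have enorm_le_u s : enorm (y s) <= u s.
  by rewrite enormE ler_wsqrtr // lerDl sqr_ge0.
have u0_le : u 0 <= enorm (y 0) + eta.
  rewrite -ler_sqr ?nnegrE ?addr_ge0 ?enorm_ge0 ?sqrtr_ge0 ?(ltW eta0) //.
  rewrite sqr_sqrtr ?addr_ge0 ?edot_ge0 ?sqr_ge0 // -enorm_sqr sqrrD lerD2r lerDl.
  by rewrite mulrn_wge0 // mulr_ge0 ?enorm_ge0 ?(ltW eta0).
have cu : {within `[0, t], continuous u}.
  move=> s; apply: (@continuous_comp (subspace `[0, t]) _ _ y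
    (fun x => Num.sqrt (edot x x + eta ^+ 2))); first exact: cy.
  exact: continuous_sqrt_edotD.
have du_le s : s \in `]0, t[ -> edot (y s) (Y s) / u s <= L * u s + h s.
  move=> st; rewrite ler_pdivrMr //.
  apply: le_trans (edot_le_enorm _ _) _.
  rewrite mulrC ler_pM ?enorm_ge0 //.
  apply: le_trans (Y_le s st) _.
  by rewrite lerD2r ler_wpM2l.
have := linear_gronwall L0 t0 cu cH
  (fun s st => is_derive_sqrt_edotD (exprn_gt0 2 eta0) (dy s st)) dH h0 du_le.
move=> /(le_trans (enorm_le_u t)) /le_trans; apply.
by rewrite ler_pM2r // lerD2r.
Qed.

Section parameterized_integral.
Context {R : realType} {g : R -> R} {a b : R}.
Notation mu := (@lebesgue_measure R).
Hypothesis cg : {within `[a, b], continuous g}.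

Lemma parameterized_integral_aa : parameterized_integral mu a a g = 0.
Proof. by rewrite /parameterized_integral set_itv1 Rintegral_set1. Qed.

Let integrable_g : mu.-integrable `[a, b] (EFin \o g).
Proof. by apply: continuous_compact_integrable => //; exact: segment_compact. Qed.

Lemma continuous_parameterized_integral : a <= b ->
  {within `[a, b], continuous (fun x => parameterized_integral mu a x g)}.
Proof. by move=> ab; exact: parameterized_integral_continuous. Qed.

Lemma is_derive_parameterized_integral {x} : x \in `]a, b[ ->
  is_derive x 1 (fun t => parameterized_integral mu a t g) (g x).
Proof.
rewrite in_itv /= => /andP[ax xb].
have cgx : {for x, continuous g}.
  have : {within `]a, b[, continuous g}.
    by apply: continuous_subspaceW cg; exact: subset_itv_oo_cc.
  rewrite continuous_open_subspace; last exact: interval_open.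
  by apply; rewrite inE /= in_itv /= ax xb.
have [dx gx] := continuous_FTC1_closed xb integrable_g ax cgx.
by apply: DeriveDef => //; rewrite -derive1E.
Qed.

Lemma parameterized_integral_le : (forall x, x \in `]a, b[ -> 0 <= g x) ->
  {in `[a, b] &, {homo (fun x => parameterized_integral mu a x g) : x y / x <= y}}.
Proof.
move=> g_ge0; have [ab|ba] := leP a b; last first.
  move=> x y; rewrite in_itv /= => /andP[ax xb].
  by have := le_trans ax xb; rewrite leNgt ba.
apply: ger0_derive1_le_cc; last exact: continuous_parameterized_integral.
- by move=> x /is_derive_parameterized_integral /(@ex_derive _ _ _ _ _ _ _).
- move=> x xab; have dx := is_derive_parameterized_integral xab.
  by rewrite derive1E derive_val; exact: g_ge0.
Qed.

End parameterized_integral.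

Lemma sup_image_addr {T : Type} {R : realType} (A : set T) (h : T -> R) (c : R) :
  has_sup (h @` A) -> sup [set h z + c | z in A] = sup (h @` A) + c.
Proof.
move=> supA; rewrite -[c in RHS]sup1 -sup_sumE ?has_sup1 //.
congr sup; apply/seteqP; split => [_ [z Az <-]|_ [_ [z Az <-] [_ -> <-]]].
  by exists (h z); [exists z | exists c].
by exists z.
Qed.

Lemma within_continuous_lt {R : realType} {A : set R} {phi : R -> R} {x b : R} :
  A x -> {within A, continuous phi} -> phi x < b ->
  exists2 e : R, 0 < e & forall s, A s -> `|x - s| < e -> phi s < b.
Proof.
move=> Ax cphi phix_lt; have /cvgr_lt/(_ _ phix_lt) phi_near := cphi x.
have : nbhs_subspace x [set s | phi s < b] := phi_near.
rewrite -(nbhs_subspace_in Ax) => /nbhs_ballP[e e0 near_x].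
by exists e => // s As xs; exact: near_x.
Qed.

Lemma continuous_induction_le {R : realType} (phi rho : R -> R) {T b : R} :
  0 < T -> {within `[0, T], continuous phi} ->
  (forall t, 0 <= t < T -> rho t < b) ->
  (forall t, 0 <= t <= T -> (forall s, 0 <= s < t -> phi s <= b) -> phi t <= rho t) ->
  forall t, 0 <= t <= T -> phi t <= rho t.
Proof.
move=> T0 cphi rho_lt step.
pose A := [set t | 0 <= t <= T /\ forall s, 0 <= s <= t -> phi s <= b].
have phi0 : phi 0 < b.
  apply: (le_lt_trans (step 0 _ _)) (rho_lt 0 _); rewrite ?lexx ?(ltW T0) ?T0 //.
  by move=> s /andP[s0 /(le_lt_trans s0)]; rewrite ltxx.
have A0 : A 0.
  split => [|s /andP[s0 s_le0]]; first by rewrite lexx (ltW T0).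
  have -> : s = 0 by apply/le_anti; rewrite s0 s_le0.
  exact: ltW.
have supA : has_sup A.
  split; first by exists 0.
  by exists T => t [/andP[]].
pose tau := sup A.
have tau_ge0 : 0 <= tau by exact: sup_upper_bound.
have tau_leT : tau <= T.
  by apply: ge_sup; [exists 0 | move=> t [/andP[]]].
have below s : 0 <= s < tau -> phi s <= b.
  move=> /andP[s0 s_lt]; have [t [_ At] st] := sup_gt (ex_intro _ 0 A0) s_lt.
  by apply: At; rewrite s0 ltW.
suff tauT : tau = T.
  move=> t /andP[t0 tT]; apply: step; first by rewrite t0 tT.
  by move=> s /andP[s0 st]; apply: below; rewrite s0 tauT (lt_le_trans st).
apply/eqP; rewrite eq_le tau_leT leNgt; apply/negP => tau_ltT.
have phi_tau : phi tau < b.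
  apply: le_lt_trans (rho_lt tau _); last by rewrite tau_ge0.
  by apply: step; [rewrite tau_ge0 | move=> s; exact: below].
have tau_in : [set` `[0, T]] tau by rewrite /= in_itv /= tau_ge0.
have [e e0 near_tau] := within_continuous_lt tau_in cphi phi_tau.
have e2_gt0 : 0 < e / 2 by rewrite divr_gt0.
pose t' := Num.min (tau + e / 2) T.
have At' : A t'.
  split => [|s /andP[s0 st']].
    rewrite ge_min lexx orbT andbT le_min (ltW T0) andbT; lra.
  have [s_lt|tau_le] := ltP s tau; first by have := below s; rewrite s0 s_lt; apply.
  move: st'; rewrite le_min => /andP[s_le sT].
  apply/ltW/near_tau; first by rewrite /= in_itv /= s0.
  by rewrite distrC ger0_norm ?subr_ge0 //; lra.
have : t' <= tau by exact: sup_upper_bound.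
rewrite ge_min => /orP[|]; first by rewrite gerDl leNgt e2_gt0.
by rewrite leNgt tau_ltT.
Qed.

Section apriori_bound.
Context {R : realType} {d : nat}.
Context {T L : R} {f f1 : 'rV[R]_d -> R -> 'rV[R]_d} {K : set 'rV[R]_d}.
Hypotheses (T_gt0 : 0 < T) (L_gt0 : 0 < L).
Hypothesis cf : forall x, {within [set` `[0, T]], continuous (f x)}.
Hypothesis f_lip : forall x x' t, t \in `[0, T] ->
  enorm (f x t - f x' t) <= L * enorm (x - x').
Hypotheses (cK : compact K) (K_neq0 : K !=set0).
Hypothesis f1_close : forall x t, Kt f L K T x -> t \in `[0, T] ->
  enorm (f1 x t - f x t) <= 1.

Let g s := enorm (f 0 s).

Let cg : {within `[0, T], continuous g}.
Proof. exact: continuous_within_enorm. Qed.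

Let int_f00 : int_f0 f 0 = 0.
Proof. exact: parameterized_integral_aa. Qed.

Let int_f0_le t t' : 0 <= t -> t <= t' -> t' <= T -> int_f0 f t <= int_f0 f t'.
Proof.
move=> t0 tt' t'T; apply: (parameterized_integral_le cg) => //.
- by move=> s _; exact: enorm_ge0.
- by rewrite in_itv /= t0 (le_trans tt').
- by rewrite in_itv /= t'T (le_trans t0).
Qed.

Let rK := sup (enorm @` K).

Let has_sup_enorm_K : has_sup (enorm @` K).
Proof.
apply: compact_has_sup; first exact: image_nonempty.
exact: continuous_compact (continuous_subspaceT continuous_enorm) cK.
Qed.

Let enorm_le_rK z : K z -> enorm z <= rK.
Proof. by move=> Kz; apply: sup_upper_bound => //; exists z. Qed.

Lemma KradiusE t : Kradius f L K t = (rK + (t + int_f0 f t)) * expR (L * t).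
Proof.
rewrite /Kradius /rK -sup_image_addr //; congr (sup _ * _).
by apply/seteqP; split => _ [z Kz <-]; exists z => //; rewrite addrA.
Qed.

Lemma Kradius_lt t : 0 <= t < T -> Kradius f L K t < Kradius f L K T.
Proof.
move=> /andP[t0 tT]; rewrite !KradiusE.
have rK_ge0 : 0 <= rK.
  by have [z Kz] := K_neq0; exact: le_trans (enorm_ge0 _) (enorm_le_rK _ Kz).
have F_ge0 : 0 <= int_f0 f t by rewrite -int_f00 int_f0_le // ltW.
have F_le : int_f0 f t <= int_f0 f T by rewrite int_f0_le // ltW.
have E_le : expR (L * t) <= expR (L * T) by rewrite ler_expR ler_pM2l // ltW.
apply: (@lt_le_trans _ _ ((rK + (T + int_f0 f T)) * expR (L * t))).
  by rewrite ltr_pM2r ?expR_gt0 //; lra.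
by rewrite ler_pM2l //; lra.
Qed.

Lemma enorm_f1_le x t : Kt f L K T x -> t \in `[0, T] ->
  enorm (f1 x t) <= L * enorm x + (1 + g t).
Proof.
move=> xK tT.
have -> : f1 x t = (f1 x t - f x t) + (f x t - f 0 t) + f 0 t.
  by rewrite [X in _ = X + _]addrA !subrK.
apply: le_trans (enormD _ _) _; rewrite [leRHS]addrA /g lerD2r.
apply: le_trans (enormD _ _) _; rewrite addrC lerD ?f1_close //.
by have := f_lip x 0 t tT; rewrite subr0.
Qed.

Context {y : R -> 'rV[R]_d}.
Hypotheses (K_y0 : K (y 0)) (cy : {within [set` `[0, T]], continuous y}).
Hypothesis dy : forall t, t \in `]0, T[ -> is_derive t 1 y (f1 (y t) t).

Lemma enorm_le_Kradius t : 0 <= t <= T ->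
  (forall s, 0 <= s < t -> Kt f L K T (y s)) -> enorm (y t) <= Kradius f L K t.
Proof.
move=> /andP[t0 tT] yK.
have sub : `[0, t] `<=` `[0, T] by apply: subset_itvl; rewrite bnd_simp.
have sub_oo s : s \in `]0, t[ -> s \in `]0, T[.
  by rewrite !in_itv /= => /andP[-> /lt_le_trans ->].
pose H s := s + int_f0 f s.
have cH : {within `[0, t], continuous H}.
  move=> s; apply: cvgD; last exact: (continuous_subspaceW sub
    (continuous_parameterized_integral cg (ltW T_gt0))).
  by apply: (continuous_subspaceT (f := id)) => z; exact: cvg_id.
have dH s : s \in `]0, t[ -> is_derive s 1 H (1 + g s).
  move=> st; apply: is_deriveD (is_derive_id s 1) _.
  exact (is_derive_parameterized_integral cg (sub_oo s st)).
have f1_le s : s \in `]0, t[ -> enorm (f1 (y s) s) <= L * enorm (y s) + (1 + g s).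
  move=> st; move: (st) (sub_oo s st); rewrite !in_itv /= => /andP[s0 st'] /andP[_ sT].
  by apply: enorm_f1_le; [apply: yK; rewrite ltW | rewrite in_itv /= !ltW].
apply: le_trans (enorm_gronwall (ltW L_gt0) t0 (continuous_subspaceW sub cy) cH
  (fun s st => dy s (sub_oo s st)) dH _ f1_le) _.
  by move=> s _; rewrite addr_ge0 // enorm_ge0.
rewrite KradiusE /H int_f00 add0r subr0 ler_pM2r ?expR_gt0 // lerD2r.
exact: enorm_le_rK _ K_y0.
Qed.

End apriori_bound.

Theorem lemma3p2 (R : realType) (d : nat) (T L : R)
  (f f1 : 'rV[R]_d -> R -> 'rV[R]_d) (K : set 'rV[R]_d)
  (z0 : 'rV[R]_d) (y : R -> 'rV[R]_d) :
  (0 < d)%N -> 0 < T -> 0 < L ->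
  (forall x : 'rV[R]_d, {within [set` `[0, T]], continuous (f x)}) ->
  (forall (x x' : 'rV[R]_d) (t : R), t \in `[0, T] ->
      enorm (f x t - f x' t) <= L * enorm (x - x')) ->
  compact K ->
  {within [set p : 'rV[R]_d * R | p.2 \in `[0, T]],
     continuous (fun p : 'rV[R]_d * R => f1 p.1 p.2)} ->
  loc_lipschitz_x f1 T ->
  (forall (x : 'rV[R]_d) (t : R), Kt f L K T x -> t \in `[0, T] ->
      enorm (f1 x t - f x t) <= 1) ->
  K z0 ->
  {within [set` `[0, T]], continuous y} ->
  (forall t : R, t \in `]0, T[ -> is_derive t 1 y (f1 (y t) t)) ->
  y 0 = z0 ->
  forall t : R, t \in `[0, T] -> Kt f L K t (y t).
Proof.
move=> _ T_gt0 L_gt0 cf f_lip cK _ _ f1_close K_z0 cy dy y0 t.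
rewrite -{}y0 in K_z0; rewrite in_itv /=.
have K_neq0 : K !=set0 by exists (y 0).
apply: (continuous_induction_le (fun s => enorm (y s)) (Kradius f L K) T_gt0).
- exact: continuous_within_enorm.
- exact: Kradius_lt L_gt0 cf cK K_neq0.
- move=> s sT ys_le.
  exact (enorm_le_Kradius T_gt0 L_gt0 cf f_lip cK K_neq0 f1_close K_z0 cy dy s sT ys_le).
Qed.
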